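(* Let $G$ be a cubic graph that has a light Xuong tree, and let $G'$ be obtained from $G$ by a diamond insertion into an edge. Then $G'$ also has a light Xuong tree.
   Context: Graphs are finite; multiple edges allowed; a cubic graph is $3$-regular. For connected $G$, $\beta(G)=|E(G)|-|V(G)|+1$, $\gamma_M(G)$ is the largest genus of a closed orientable surface on which $G$ has a cellular embedding, and $\xi(G)=\beta(G)-2\gamma_M(G)$. For a spanning tree $T$ the cotree is $G-E(T)$; a cotree component is odd if it has an odd number of edges; $T$ is a Xuong tree if its cotree has exactly $\xi(G)$ odd components. A Xuong tree is light if its cotree has exactly one odd component and that component consists of a single edge. A diamond is $K_4$ minus an edge; its two $2$-valent vertices are its ends. Inserting a diamond into an edge $e=uv$: replace $e$ by a path $uu'v'v$ and replace the inner edge $u'v'$ by a diamond whose two $2$-valent vertices are $u'$ and $v'$ (so $u'$ and $v'$ are both adjacent to two new adjacent vertices $s,t$). *)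

(* Finite multigraphs (loopless, multiple edges allowed)
   given by a finite vertex type V, a finite edge type E and an
   endpoint map ends : E -> V * V (edge orientation is irrelevant). *)
From HB Require Import structures.
From mathcomp Require Import all_boot fingroup perm.
Set Implicit Arguments. Unset Strict Implicit. Unset Printing Implicit Defensive.

Section MGraph.
Variables (V E : finType) (ends : E -> V * V).

Definition loopless := forall e, (ends e).1 != (ends e).2.

(* darts = half-edges (e, b); tail of a dart *)
Definition tail (d : E * bool) : V := if d.2 then (ends d.1).1 else (ends d.1).2.
Definition flip (d : E * bool) : E * bool := (d.1, ~~ d.2).

Definition degree (v : V) := #|[set d : E * bool | tail d == v]|.
Definition cubic := forall v, degree v = 3.

Definition adj (S : {set E}) : rel V :=
  fun x y => [exists f in S, (ends f == (x, y)) || (ends f == (y, x))].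
Definition connected_on (S : {set E}) := forall x y, connect (adj S) x y.

(* spanning tree: a connected spanning subgraph that is acyclic, i.e. no
   edge of T lies on a cycle of T (each edge of T is a bridge of T) *)
Definition spanning_tree (T : {set E}) :=
  connected_on T /\
  forall f, f \in T -> ~~ connect (adj (T :\ f)) (ends f).1 (ends f).2.

Definition comps (S : {set E}) : {set {set V}} :=
  [set [set y | connect (adj S) x y] | x : V].
Definition comp_edges (S : {set E}) (C : {set V}) := [set f in S | (ends f).1 \in C].
Definition odd_comps (T : {set E}) :=
  [set C in comps (~: T) | odd #|comp_edges (~: T) C|].

(* Cellular embeddings in closed orientable surfaces = rotation systems:
   a permutation r of the darts that cyclically permutes the darts at each
   vertex; faces are the orbits of d |-> r (flip d). *)
Definition rotation_system (r : {perm E * bool}) :=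
  (forall d, tail (r d) = tail d) /\
  (forall d d', tail d = tail d' -> fconnect r d d').
Definition nfaces (r : {perm E * bool}) :=
  fcard (fun d => r (flip d)) [set: E * bool].
(* Euler: |V| - |E| + F = 2 - 2g *)
Definition has_genus (r : {perm E * bool}) (g : nat) :=
  #|V| + nfaces r + 2 * g = #|E| + 2.
Definition max_genus (g : nat) :=
  (exists2 r, rotation_system r & has_genus r g) /\
  (forall r g', rotation_system r -> has_genus r g' -> g' <= g).

(* Xuong tree: #odd cotree components = xi(G) = beta(G) - 2 gamma_M(G),
   with beta(G) = |E| - |V| + 1 *)
Definition xuong_tree (T : {set E}) :=
  spanning_tree T /\
  exists g, max_genus g /\ #|odd_comps T| + 2 * g + #|V| = #|E| + 1.

Definition light_xuong_tree (T : {set E}) :=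
  xuong_tree T /\
  exists C, odd_comps T = [set C] /\ #|comp_edges (~: T) C| = 1.

Definition has_light_xuong_tree := exists T, light_xuong_tree T.

End MGraph.

(* Diamond insertion into the edge e = uv, u = (ends e).1, v = (ends e).2.
   New vertices: u' = 0, v' = 1, s = 2, t = 3; e is deleted and the edges
   uu', v'v, u's, u't, v's, v't, st are added. *)
Section Diamond.
Variables (V E : finType) (ends : E -> V * V) (e : E).

Definition dV := (V + 'I_4)%type.
Definition dE := ({x : E | x != e} + 'I_7)%type.

Definition dnew (k : nat) : dV := inr (@inord 3 k).

Definition dends (x : dE) : dV * dV :=
  match x with
  | inl y => (inl (ends (val y)).1, inl (ends (val y)).2)
  | inr i =>
      let u : dV := inl (ends e).1 in
      let v : dV := inl (ends e).2 in
      match val i with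
      | 0 => (u, dnew 0)
      | 1 => (dnew 1, v)
      | 2 => (dnew 0, dnew 2)
      | 3 => (dnew 0, dnew 3)
      | 4 => (dnew 1, dnew 2)
      | 5 => (dnew 1, dnew 3)
      | _ => (dnew 2, dnew 3)
      end
  end.

End Diamond.

Arguments dends {V E} ends e x.

From HB Require Import structures.
From mathcomp Require Import all_boot fingroup perm zify.
Set Implicit Arguments. Unset Strict Implicit. Unset Printing Implicit Defensive.

(* A light Xuong tree [T] of [G] shows that [G] has maximum genus [g] with
   beta(G) = 2g + 1.  Extending a rotation system of genus [g] by suitable
   rotations at the four new vertices puts every new dart on an old face, so
   [G'] embeds with as many faces as [G], i.e. with genus g + 1; since
   beta(G') = beta(G) + 2, Euler's formula shows that g + 1 is the maximum genus
   of [G'].  It remains to find a spanning tree of [G'] whose cotree has a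
   single odd component, made of one edge.  If [e] is in [T], it is replaced by
   the path u u' s v' v plus the edge st, and the cotree gains the even path
   u' t v'.  If [e] is a cotree edge, deleting it splits its cotree component
   into the pieces of [u] and [v]; the new cotree has a pendant edge at one of
   [u], [v] (namely uu' or v'v), chosen so that the parities of the pieces
   add up as before, and an even path through the other new vertices. *)

Section Connect.
Variable T : finType.
Implicit Types P : pred T.

Lemma connect_invariant (R : rel T) P x y :
  (forall x y, P x -> R x y -> P y) -> P x -> connect R x y -> P y.
Proof.
move=> hP Px /connectP [p Rp ->]; elim: p x Px Rp => [|z p IHp] x Px //=.
by case/andP=> /(hP _ _ Px) Pz; apply: IHp.
Qed.

Lemma connect_homo (T' : finType) (R : rel T) (R' : rel T') (g : T -> T') x y :
  (forall x y, R x y -> connect R' (g x) (g y)) ->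
  connect R x y -> connect R' (g x) (g y).
Proof.
move=> hg; apply: (connect_invariant (P := fun z => connect R' (g x) (g z))).
  by move=> a b hxa /hg; apply: connect_trans.
exact: connect0.
Qed.

Lemma connect_sub_from (R R' : rel T) a b :
  (forall x y, connect R a x -> R x y -> R' x y) ->
  connect R a b -> connect R' a b.
Proof.
move=> hR hab; suff /andP [] : connect R a b && connect R' a b by [].
apply: (connect_invariant (P := fun z => connect R a z && connect R' a z)) hab;
  last by rewrite !connect0.
move=> x y /andP [hx hx'] hxy; rewrite (connect_trans hx (connect1 hxy)).
by rewrite (connect_trans hx' (connect1 (hR _ _ hx hxy))).
Qed.

End Connect.

(** * Cotree components *)

Section Multigraph.
Variables (V E : finType) (ends : E -> V * V).
Implicit Types S T : {set E}.
Local Notation adj := (adj ends).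

Lemma adj_sym S : symmetric (adj S).
Proof.
by move=> x y; apply/existsP/existsP => -[f /andP [fS h]]; exists f; rewrite fS orbC.
Qed.

Lemma connect_adj_sym S : connect_sym (adj S).
Proof. exact/sym_connect_sym/adj_sym. Qed.

Lemma adj_edge S f x y : f \in S -> ends f = (x, y) -> adj S x y.
Proof. by move=> fS h; apply/existsP; exists f; rewrite fS h eqxx. Qed.

Lemma adjP S x y :
  reflect (exists2 f, f \in S & ends f = (x, y) \/ ends f = (y, x)) (adj S x y).
Proof.
apply: (iffP existsP) => [[f /andP [fS /orP [] /eqP]]|[f fS [] h]].
- by exists f; [|left].
- by exists f; [|right].
- by exists f; rewrite fS h eqxx.
- by exists f; rewrite fS h eqxx orbT.
Qed.

Lemma adjS S S' x y : S \subset S' -> adj S x y -> adj S' x y.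
Proof.
by move=> /subsetP sSS' /adjP [f /sSS' fS' hf]; apply/adjP; exists f.
Qed.

Lemma connect_adjS S S' x y : S \subset S' ->
  connect (adj S) x y -> connect (adj S') x y.
Proof. by move=> sSS'; apply: connect_sub => a b /(adjS sSS') /connect1. Qed.

Definition comp_of S x := [set y | connect (adj S) x y].

Lemma comp_ofP S x y :
  reflect (comp_of S x = comp_of S y) (connect (adj S) x y).
Proof.
apply: (iffP idP) => [hxy|/setP /(_ y)]; last by rewrite !inE connect0.
apply/setP => z; rewrite !inE; apply/idP/idP; last exact: connect_trans.
by apply: connect_trans; rewrite connect_adj_sym.
Qed.

Lemma comp_of_comps S x : comp_of S x \in comps ends S.
Proof. exact: imset_f. Qed.

Section LightCotree.
Variables (T : {set E}) (C : {set V}).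
Hypothesis oddT : odd_comps ends T = [set C].

Lemma odd_comp_of a :
  odd #|comp_edges ends (~: T) (comp_of (~: T) a)| -> comp_of (~: T) a = C.
Proof.
move=> hodd; suff : comp_of (~: T) a \in odd_comps ends T by rewrite oddT inE => /eqP.
by rewrite inE comp_of_comps.
Qed.

Lemma odd_comp_repr : exists a, C = comp_of (~: T) a.
Proof.
have : C \in odd_comps ends T by rewrite oddT inE.
by rewrite inE => /andP [/imsetP [a _ ->] _]; exists a.
Qed.

End LightCotree.

Lemma odd_comps_set1 T x0 :
  #|comp_edges ends (~: T) (comp_of (~: T) x0)| = 1 ->
  (forall x y, odd #|comp_edges ends (~: T) (comp_of (~: T) x)| ->
     odd #|comp_edges ends (~: T) (comp_of (~: T) y)| -> connect (adj (~: T)) x y) ->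
  odd_comps ends T = [set comp_of (~: T) x0].
Proof.
move=> one_x0 odd_conn; apply/setP => D; rewrite !inE.
apply/andP/eqP => [[/imsetP [x _ ->] odd_x] | ->]; last by rewrite comp_of_comps one_x0.
by apply/comp_ofP/odd_conn; rewrite ?one_x0.
Qed.

Definition light_spanning_tree T := spanning_tree ends T /\
  exists C, odd_comps ends T = [set C] /\ #|comp_edges ends (~: T) C| = 1.

Section EdgeDeletion.
Variables (S : {set E}) (e : E).
Hypothesis eS : e \in S.
Local Notation u := (ends e).1.
Local Notation v := (ends e).2.
Local Notation R := (adj S).
Local Notation R0 := (adj (S :\ e)).

Lemma adj_uv : R u v.
Proof. by apply: (adj_edge eS); case: (ends e). Qed.

Lemma adj_delete x y :
  R x y -> R0 x y \/ (x = u /\ y = v) \/ (x = v /\ y = u).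
Proof.
case/adjP => f fS hf; have [fe | fe] := eqVneq f e.
  by right; move: hf; rewrite fe => -[] ->; [left | right].
by left; apply/adjP; exists f; rewrite // !inE fe.
Qed.

Lemma connect_delete b : connect R u b = connect R0 u b || connect R0 v b.
Proof.
apply/idP/idP => [|/orP [] hb].
- apply: (connect_invariant (P := fun z => connect R0 u z || connect R0 v z)).
    move=> x y /orP [] hx /adj_delete [r | [] [_ ->]]; rewrite ?connect0 ?orbT //.
      by rewrite (connect_trans hx (connect1 r)).
    by rewrite (connect_trans hx (connect1 r)) orbT.
  by rewrite connect0.
- exact: connect_adjS (subsetDl _ _) hb.
- exact: connect_trans (connect1 adj_uv) (connect_adjS (subsetDl _ _) hb).
Qed.

Lemma comp_of_delete_far a :
  ~~ connect R u a -> comp_of (S :\ e) a = comp_of S a.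
Proof.
move=> nua; apply/setP => b; rewrite !inE; apply/idP/idP.
  exact: connect_adjS (subsetDl _ _).
apply: connect_sub_from => x y hax /adj_delete [// | [] [hx _]]; subst x.
  by rewrite connect_adj_sym hax in nua.
by rewrite connect_adj_sym (connect_trans hax (connect1 _)) // adj_sym adj_uv in nua.
Qed.

Lemma comp_edges_delete_far a : ~~ connect R u a ->
  comp_edges ends (S :\ e) (comp_of (S :\ e) a) = comp_edges ends S (comp_of S a).
Proof.
move=> nua; rewrite comp_of_delete_far //; apply/setP => f; rewrite !inE.
have [-> | //] := eqVneq f e; rewrite eS /=.
by apply/esym/negbTE; rewrite connect_adj_sym.
Qed.

Lemma card_comp_edges_delete :
  #|comp_edges ends S (comp_of S u)| =
  #|comp_edges ends (S :\ e) (comp_of (S :\ e) u)| +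
  (if connect R0 u v then 0 else #|comp_edges ends (S :\ e) (comp_of (S :\ e) v)|) + 1.
Proof.
set Du := comp_edges ends (S :\ e) (comp_of (S :\ e) u).
set Dv := comp_edges ends (S :\ e) (comp_of (S :\ e) v).
have -> : comp_edges ends S (comp_of S u) = e |: (Du :|: Dv).
  apply/setP => f; rewrite !inE connect_delete.
  by have [-> | fe] := eqVneq f e; rewrite ?eS ?connect0 //= andb_orr.
rewrite cardsU1 !inE eqxx /= add1n addn1; congr _.+1.
case: ifP => [/comp_ofP huv | nuv]; first by rewrite /Dv -huv setUid addn0.
rewrite cardsU; suff -> : Du :&: Dv = set0 by rewrite cards0 subn0.
apply/setP => f; rewrite !inE; apply/negP => /and3P [/andP [_ hu] _ hv].
by rewrite (connect_trans hu _) // connect_adj_sym in nuv.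
Qed.

End EdgeDeletion.

Section SplitComponent.
Variables (T : {set E}) (C : {set V}) (e : E) (w : V).
Hypotheses (oddT : odd_comps ends T = [set C])
  (oneC : #|comp_edges ends (~: T) C| = 1) (eS : e \in ~: T).
Local Notation u := (ends e).1.
Local Notation v := (ends e).2.
Hypothesis w_end : w \in [:: u; v].
Local Notation S := (~: T).
Local Notation S0 := (~: T :\ e).
Local Notation count S x := #|comp_edges ends S (comp_of S x)|.

(* The new edge counts of the cotree components when [e] is deleted and a
   pendant edge is attached at the endpoint [w]. *)
Definition split_count a := count S0 a + (w \in comp_of S0 a).
Local Notation c := split_count.

Lemma connect_u_w : connect (adj S) u w.
Proof.
by move: w_end; rewrite !inE => /orP [] /eqP ->; rewrite ?connect0 ?connect1 ?adj_uv.
Qed.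

Lemma split_count_eq a b : connect (adj S0) a b -> c a = c b.
Proof. by move/comp_ofP; rewrite /split_count => ->. Qed.

Lemma split_count_far a : ~~ connect (adj S) u a -> c a = count S a.
Proof.
move=> nua; rewrite /split_count comp_edges_delete_far // inE.
suff -> : connect (adj S0) a w = false by rewrite addn0.
apply: contraNF nua => haw; apply: connect_trans connect_u_w _.
by rewrite connect_adj_sym (connect_adjS (subsetDl _ _) haw).
Qed.

Lemma count_split :
  count S u = if connect (adj S0) u v then c u else c u + c v.
Proof.
rewrite card_comp_edges_delete // /split_count !inE.
have hvu : connect (adj S0) v u = connect (adj S0) u v by rewrite connect_adj_sym.
by move: w_end; rewrite !inE => /orP [] /eqP ->; rewrite !connect0 ?hvu;
  case: (connect _ u v) => /=; lia.
Qed.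

Lemma connect_delete_end a : connect (adj S) u a ->
  exists2 p, p \in [:: u; v] & connect (adj S0) p a.
Proof.
rewrite connect_delete // => /orP [] hpa; [exists u | exists v] => //;
  by rewrite !inE eqxx ?orbT.
Qed.

Lemma split_count_one : exists a, c a = 1.
Proof.
have [a0 C_a0] := odd_comp_repr oddT.
case: (boolP (connect (adj S) u a0)) => [/comp_ofP hu | nua0].
  move: oneC; rewrite C_a0 -hu count_split.
  case: ifP => _ hc; first by exists u.
  by case hcu : (c u) hc => [|[|n]] hc; [exists v | exists u | ].
by exists a0; rewrite split_count_far // -C_a0.
Qed.

Definition pendant_fits := [|| connect (adj S0) u v, ~~ odd (c u) | ~~ odd (c v)].
Hypothesis fits : pendant_fits.

Lemma odd_split_ends p q : p \in [:: u; v] -> q \in [:: u; v] ->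
  odd (c p) -> odd (c q) -> connect (adj S0) p q.
Proof.
have odd_uv : odd (c u) -> odd (c v) -> connect (adj S0) u v.
  by case/or3P: fits => [-> // | /negbTE -> | /negbTE ->].
rewrite !inE => /orP [] /eqP -> /orP [] /eqP -> odd_p odd_q; rewrite ?connect0 //.
  exact: odd_uv.
by rewrite connect_adj_sym; apply: odd_uv.
Qed.

Lemma odd_split_near a : connect (adj S) u a -> odd (c a) -> comp_of S u = C.
Proof.
case/connect_delete_end => p hp hpa; rewrite -(split_count_eq hpa) => odd_p.
apply: (odd_comp_of oddT); rewrite count_split; case: ifP => huv.
  by move: hp odd_p; rewrite !inE => /orP [] /eqP -> //; rewrite (split_count_eq huv).
rewrite oddD; move: fits; rewrite /pendant_fits huv /=.
by move: hp odd_p; rewrite !inE => /orP [] /eqP -> ->; case: (odd _).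
Qed.

Lemma odd_split_far a : ~~ connect (adj S) u a -> odd (c a) -> comp_of S0 a = C.
Proof.
move=> nua; rewrite comp_of_delete_far // split_count_far //.
exact: odd_comp_of.
Qed.

Lemma split_count_odd a b : odd (c a) -> odd (c b) -> connect (adj S0) a b.
Proof.
have mixed x y : connect (adj S) u x -> ~~ connect (adj S) u y ->
    odd (c x) -> odd (c y) -> False.
  move=> hux nuy /(odd_split_near hux) hu /(odd_split_far nuy).
  rewrite comp_of_delete_far // -hu => /esym /comp_ofP.
  by apply/negP.
case: (boolP (connect (adj S) u a)) => hua; case: (boolP (connect (adj S) u b)) => hub.
- case/connect_delete_end: hua => p hp hpa; case/connect_delete_end: hub => q hq hqb.
  rewrite -(split_count_eq hpa) -(split_count_eq hqb) => odd_p odd_q.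
  apply: connect_trans (connect_trans (odd_split_ends hp hq odd_p odd_q) hqb).
  by rewrite connect_adj_sym.
- by move=> odd_a odd_b; case: (mixed a b).
- by move=> odd_a odd_b; case: (mixed b a).
by move=> /(odd_split_far hua) Ca /(odd_split_far hub) Cb; apply/comp_ofP; rewrite Ca Cb.
Qed.

End SplitComponent.

Lemma pendant_fits_v T e :
  ~~ pendant_fits T e (ends e).1 -> pendant_fits T e (ends e).2.
Proof.
rewrite /pendant_fits; set S0 := ~: T :\ e; set u := (ends e).1; set v := (ends e).2.
case: (boolP (connect (adj S0) u v)) => //= nuv.
have nvu : connect (adj S0) v u = false by rewrite connect_adj_sym (negbTE nuv).
rewrite /split_count !inE !connect0 (negbTE nuv) nvu !addn0 !addn1 /=.
by case: (odd _).
Qed.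

End Multigraph.

Lemma flip_inj (T : finType) : injective (@flip T).
Proof. by case=> x b [y c] [-> /negbRL]; rewrite negbK => ->. Qed.

(** * The diamond *)

Section Diamond.
Variables (V E : finType) (ends : E -> V * V) (e : E).
Local Notation G' := (dends ends e).
Local Notation V' := (dV V : finType).
Local Notation E' := (dE e : finType).
Local Notation u := (ends e).1.
Local Notation v := (ends e).2.
Local Notation o4 k := (@Ordinal 4 k isT).
Local Notation o7 k := (@Ordinal 7 k isT).

Local Notation du := (inr (o4 0) : V').
Local Notation dv := (inr (o4 1) : V').
Local Notation ds := (inr (o4 2) : V').
Local Notation dt := (inr (o4 3) : V').

(* The ends of the new edges, as in [dends] but with ordinals that compute. *)
Definition dnew_ends (k : nat) : V' * V' :=
  match k with
  | 0 => (inl u, du)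
  | 1 => (dv, inl v)
  | 2 => (du, ds)
  | 3 => (du, dt)
  | 4 => (dv, ds)
  | 5 => (dv, dt)
  | _ => (ds, dt)
  end.

Lemma dends_new (i : 'I_7) : G' (inr i) = dnew_ends i.
Proof.
have [h0 h1 h2 h3] : [/\ dnew V 0 = du, dnew V 1 = dv, dnew V 2 = ds & dnew V 3 = dt].
  by split; congr inr; apply: val_inj; rewrite /= inordK.
by rewrite /dends /dnew_ends !h0 !h1 !h2 !h3; case: i => [[|[|[|[|[|[|k]]]]]] ?].
Qed.

Lemma dends_old (y : {x : E | x != e}) :
  G' (inl y) = (inl (ends (val y)).1, inl (ends (val y)).2).
Proof. by []. Qed.

Lemma I7_ind (P : 'I_7 -> Prop) :
  P (o7 0) -> P (o7 1) -> P (o7 2) -> P (o7 3) -> P (o7 4) -> P (o7 5) -> P (o7 6) ->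
  forall i, P i.
Proof.
move=> p0 p1 p2 p3 p4 p5 p6 [[|[|[|[|[|[|[|k]]]]]]] Hk] //;
  by rewrite (bool_irrelevance Hk isT).
Qed.

Lemma I4_ind (P : 'I_4 -> Prop) :
  P (o4 0) -> P (o4 1) -> P (o4 2) -> P (o4 3) -> forall i, P i.
Proof.
move=> p0 p1 p2 p3 [[|[|[|[|k]]]] Hk] //; by rewrite (bool_irrelevance Hk isT).
Qed.

Ltac case_I7 i := elim/I7_ind: i; rewrite ?dends_new ?inE /= ?connect0.

Lemma card_dV : #|V'| = #|V| + 4.
Proof. by rewrite card_sum card_ord. Qed.

Lemma card_dE : #|E'| = #|E| + 6.
Proof.
rewrite card_sum card_sig card_ord.
have := cardC1 e; rewrite /predC1 => ->.
have : 0 < #|E| by apply/card_gt0P; exists e.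
lia.
Qed.

(** * Embedding *)

(* The dart of [e] at [u] becomes the dart of [uu'] at [u], and the dart of
   [e] at [v] the dart of [v'v] at [v]. *)
Definition lift_dart (d : E * bool) : E' * bool :=
  if insub d.1 is Some y then (inl y, d.2)
  else if d.2 then (inr (o7 0), true) else (inr (o7 1), false).

Definition old_dart (d : E' * bool) : bool :=
  match d with
  | (inl _, _) => true
  | (inr i, b) => (val i == 0) && b || (val i == 1) && ~~ b
  end.

(* A new dart is sent to the dart of [e] whose face it joins under [drot]. *)
Definition proj_dart (d : E' * bool) : E * bool :=
  match d with
  | (inl y, b) => (val y, b)
  | (inr i, b) => (e, match val i with 0 | 1 | 2 | 6 => b | 5 => ~~ b | _ => false end)
  end.

Lemma lift_dart_old (y : {x : E | x != e}) b : lift_dart (val y, b) = (inl y, b).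
Proof. by rewrite /lift_dart /= valK. Qed.

Lemma lift_dart_e b :
  lift_dart (e, b) = if b then (inr (o7 0), true) else (inr (o7 1), false).
Proof. by rewrite /lift_dart /= insubF // eqxx. Qed.

Variant lift_dart_spec (d : E * bool) : E' * bool -> Type :=
  | LiftOld (y : {x : E | x != e}) b of d = (val y, b) : lift_dart_spec d (inl y, b)
  | LiftU of d = (e, true) : lift_dart_spec d (inr (o7 0), true)
  | LiftV of d = (e, false) : lift_dart_spec d (inr (o7 1), false).

Lemma lift_dartP d : lift_dart_spec d (lift_dart d).
Proof.
case: d => x b; have [xe | xe] := eqVneq x e; last first.
  by rewrite -[x]/(val (Sub x xe : {x : E | x != e})) lift_dart_old; constructor.
by subst x; rewrite lift_dart_e; case: b; constructor.
Qed.

Lemma lift_dartK : cancel lift_dart proj_dart.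
Proof. by move=> d; case: lift_dartP => [y b ->| -> | ->]. Qed.

Lemma old_lift_dart d : old_dart (lift_dart d).
Proof. by case: lift_dartP. Qed.

Lemma proj_dartK d : old_dart d -> lift_dart (proj_dart d) = d.
Proof.
case: d => [[y | [[|[|k]] Hk]] b] //=; first by rewrite lift_dart_old.
  by case: b => //= _; rewrite lift_dart_e; congr (inr _, _); apply: val_inj.
by case: b => //= _; rewrite lift_dart_e; congr (inr _, _); apply: val_inj.
Qed.

(* The rotations at u', v', s and t; they put every new dart on the face of an
   old dart, so that no face is created. *)
Definition rot_new (d : E' * bool) : E' * bool :=
  match d with
  | (inl _, _) => d
  | (inr i, b) =>
    match val i, b with
    | 0, false => (inr (o7 2), true)
    | 2, true => (inr (o7 3), true)
    | 3, true => (inr (o7 0), false)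
    | 2, false => (inr (o7 6), true)
    | 6, true => (inr (o7 4), false)
    | 4, false => (inr (o7 2), false)
    | 6, false => (inr (o7 5), false)
    | 5, false => (inr (o7 3), false)
    | 3, false => (inr (o7 6), false)
    | 5, true => (inr (o7 1), true)
    | 1, true => (inr (o7 4), true)
    | 4, true => (inr (o7 5), true)
    | _, _ => d
    end
  end.

Definition rot_new_inv (d : E' * bool) : E' * bool :=
  match d with
  | (inl _, _) => d
  | (inr i, b) =>
    match val i, b with
    | 2, true => (inr (o7 0), false)
    | 3, true => (inr (o7 2), true)
    | 0, false => (inr (o7 3), true)
    | 6, true => (inr (o7 2), false)
    | 4, false => (inr (o7 6), true)
    | 2, false => (inr (o7 4), false)
    | 5, false => (inr (o7 6), false)
    | 3, false => (inr (o7 5), false)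
    | 6, false => (inr (o7 3), false)
    | 1, true => (inr (o7 5), true)
    | 4, true => (inr (o7 1), true)
    | 5, true => (inr (o7 4), true)
    | _, _ => d
    end
  end.

Section Rotation.
Variable r : {perm E * bool}.

Definition drot_fun d := if old_dart d then lift_dart (r (proj_dart d)) else rot_new d.
Definition drot_inv d :=
  if old_dart d then lift_dart ((r^-1)%g (proj_dart d)) else rot_new_inv d.

Ltac case_dart d := let i := fresh "i" in let b := fresh "b" in
  case: d => [[? | i] b]; [| elim/I7_ind: i; case: b].

Lemma drot_funK : cancel drot_fun drot_inv.
Proof.
move=> d; rewrite /drot_inv /drot_fun; case hd: (old_dart d).
  by rewrite old_lift_dart lift_dartK permK proj_dartK.
by move: hd; case_dart d.
Qed.

Definition drot : {perm E' * bool} := perm (can_inj drot_funK).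

Lemma drotE d : drot d = drot_fun d.
Proof. by rewrite permE. Qed.

Lemma drot_lift d : drot (lift_dart d) = lift_dart (r d).
Proof. by rewrite drotE /drot_fun old_lift_dart lift_dartK. Qed.

Lemma tail_lift_dart d : tail G' (lift_dart d) = inl (tail ends d).
Proof.
by case: lift_dartP => [y b -> | -> | ->]; rewrite /tail ?dends_new //=; case: b.
Qed.

Lemma tail_old_dart d : old_dart d -> tail G' d = inl (tail ends (proj_dart d)).
Proof. by move/proj_dartK => {1}<-; rewrite tail_lift_dart. Qed.

Lemma fconnect_lift_dart x y : fconnect r x y -> fconnect drot (lift_dart x) (lift_dart y).
Proof. by apply: connect_homo => a b /eqP <-; rewrite connect1 //= drot_lift. Qed.

Definition dface d := drot (flip d).

Ltac orbit_steps :=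
  do 12 (try (first [exact: connect0
                    | apply: (connect_trans (fconnect1 _ _));
                      rewrite /dface ?drotE /drot_fun /=])).

Lemma rotation_system_drot : rotation_system ends r -> rotation_system G' drot.
Proof.
case=> rt rc; split.
  move=> d; rewrite drotE /drot_fun; case hd: (old_dart d).
    by rewrite tail_lift_dart rt tail_old_dart.
  by move: hd; case_dart d => //= _; rewrite /tail ?dends_new.
move=> d d'; case hd: (old_dart d); case hd': (old_dart d').
- by rewrite !tail_old_dart // => -[/rc /fconnect_lift_dart]; rewrite !proj_dartK.
- by rewrite (tail_old_dart hd); move: hd'; case_dart d' => //= _; rewrite /tail ?dends_new.
- by rewrite (tail_old_dart hd'); move: hd; case_dart d => //= _; rewrite /tail ?dends_new.
move: hd hd'; case_dart d => //= _; case_dart d' => //= _;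
  rewrite /tail ?dends_new /= => /eqP /= h; try by [].
all: orbit_steps.
Qed.

(* [lift_dart] induces a bijection between the faces of [r] and of [drot]. *)
Lemma nfaces_drot : nfaces drot = nfaces r.
Proof.
rewrite /nfaces; pose face d := r (flip d).
have dface_inj : injective dface by move=> x y /perm_inj /flip_inj.
have face_inj : injective face by move=> x y /perm_inj /flip_inj.
have dface_sym := fconnect_sym dface_inj; have face_sym := fconnect_sym face_inj.
have closedT : closed (frel dface) [set: E' * bool] by move=> x y _; rewrite !inE.
have adj_lift : rel_adjunction lift_dart (frel dface) (frel face) [set: E' * bool].
  apply: (intro_adjunction face_sym closedT (fun x _ => proj_dart x)).
  - move=> x _; split.
      case hx: (old_dart x); first by rewrite proj_dartK.
      rewrite dface_sym; move: hx; case_dart x => //= _; rewrite ?lift_dart_e; orbit_steps.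
    move=> y _ /eqP <-; rewrite /dface drotE /drot_fun.
    case: x => [[z | i] b].
      by rewrite /= lift_dartK; apply: (fconnect1 face).
    elim/I7_ind: i; case: b; rewrite /= ?lift_dartK; try exact: connect0;
      by apply: (fconnect1 face).
  - move=> x _; split; first by rewrite lift_dartK connect0.
    by move=> y /eqP <-; case: lift_dartP => [z b -> | -> | ->]; orbit_steps.
rewrite (adjunction_n_comp lift_dart dface_sym face_sym closedT adj_lift).
by apply: eq_n_comp_r => d; rewrite !inE.
Qed.

End Rotation.

Lemma max_genus_dends r g :
  rotation_system ends r -> has_genus V r g -> #|E| = #|V| + 2 * g ->
  max_genus G' g.+1.
Proof.
move=> rot_r genus_r hE; split.
  exists (drot r); first exact: rotation_system_drot.
  by move: genus_r; rewrite /has_genus nfaces_drot card_dV card_dE; lia.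
move=> r' g' _; rewrite /has_genus card_dV card_dE => genus_r'.
(* Euler's formula with at least one face. *)
have : 0 < nfaces r'.
  apply/fcard_gt0P; first by move=> x y /perm_inj /flip_inj.
    by move=> x y _; rewrite !inE.
  by exists (inr (o7 0), true).
lia.
Qed.

(** * Spanning trees *)

Local Notation count X x := #|comp_edges G' X (comp_of G' X x)|.
Implicit Types (S T : {set E}) (X : {set E'}) (l : seq nat).

Definition new_in l (x : V') : bool := if x is inr j then val j \in l else false.

Definition collapse (k : 'I_4 -> V) (x : V') : V :=
  match x with inl a => a | inr i => k i end.

Lemma connect_collapse X S k x y :
  (forall z, inl z \in X -> val z \in S) ->
  (forall i, inr i \in X ->
     connect (adj ends S) (collapse k (dnew_ends i).1) (collapse k (dnew_ends i).2)) ->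
  connect (adj G' X) x y -> connect (adj ends S) (collapse k x) (collapse k y).
Proof.
move=> hold hnew; apply: connect_homo => {}x {}y /adjP [[z | i] fX hf].
  rewrite dends_old in hf; apply/connect1/adjP; exists (val z); first exact: hold.
  by case: hf => -[<- <-]; [left | right]; case: (ends _).
by have := hnew _ fX; rewrite -dends_new; case: hf => ->; rewrite // connect_adj_sym.
Qed.

Lemma connect_cut X (P : pred V') x y :
  (forall f, f \in X -> P (G' f).1 = P (G' f).2) ->
  connect (adj G' X) x y -> P x = P y.
Proof.
move=> hP; apply: (closed_connect (a := P)) => {}x {}y /adjP [f /hP fX [] hf];
  by rewrite hf /= in fX; rewrite !unfold_in fX.
Qed.

Lemma connect_lift X S a b :
  (forall f, f \in S -> connect (adj G' X) (inl (ends f).1) (inl (ends f).2)) ->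
  connect (adj ends S) a b -> connect (adj G' X) (inl a) (inl b).
Proof.
move=> hS; apply: connect_homo => {}a {}b /adjP [f /hS fX [] hf];
  by rewrite hf /= in fX; rewrite // connect_adj_sym.
Qed.

Lemma connect_old_edge X (z : {x : E | x != e}) : inl z \in X ->
  connect (adj G' X) (inl (ends (val z)).1) (inl (ends (val z)).2).
Proof. by move=> zX; apply/connect1/(adj_edge zX). Qed.

Lemma connect_new_edge X i : inr i \in X ->
  connect (adj G' X) (dnew_ends i).1 (dnew_ends i).2.
Proof.
by move=> iX; apply/connect1/(adj_edge iX); rewrite dends_new; case: (dnew_ends _).
Qed.

Lemma connect_new_edge_sym X i : inr i \in X ->
  connect (adj G' X) (dnew_ends i).2 (dnew_ends i).1.
Proof. by rewrite connect_adj_sym; apply: connect_new_edge. Qed.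

Definition dsub S l : {set E'} :=
  [set x | match x with inl z => val z \in S | inr i => val i \in l end].

Lemma card_I7 (P : pred 'I_7) : #|[set i | P i]| =
  P (o7 0) + P (o7 1) + P (o7 2) + P (o7 3) + P (o7 4) + P (o7 5) + P (o7 6).
Proof.
rewrite -sum1_card big_mkcond /= !big_ord_recl big_ord0 addn0 !inE !addnA.
have b2n i (lt_i7 : i < 7) : (if P (Ordinal lt_i7) then 1 else 0) = P (Ordinal lt_i7).
  by case: (P _).
by rewrite !b2n; repeat congr (_ + _); congr (nat_of_bool (P _)); apply: val_inj.
Qed.

Lemma card_comp_edges_dsub S l (D : {set V'}) : e \notin S ->
  #|comp_edges G' (dsub S l) D| =
  #|comp_edges ends S [set a | inl a \in D]| +
  #|[set i : 'I_7 | (val i \in l) && ((dnew_ends i).1 \in D)]|.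
Proof.
move=> eS; set A := [set z | inl z \in comp_edges G' (dsub S l) D].
set B := [set i : 'I_7 | _].
have -> : comp_edges G' (dsub S l) D = inl @: A :|: inr @: B.
  apply/setP => -[z | i]; rewrite in_setU.
    rewrite (mem_imset _ _ (@inl_inj _ _)) [z \in A]inE.
    by case: imsetP => [[? _ //] | _]; rewrite orbF.
  rewrite (mem_imset _ _ (@inr_inj _ _)) [i \in B]inE.
  by case: imsetP => [[? _ //] | _] /=; rewrite !inE dends_new.
rewrite cardsU (_ : _ :&: _ = set0) ?cards0 ?subn0; last first.
  by apply/setP => x; rewrite !inE; apply/andP => -[/imsetP [? _ ->] /imsetP [? _]].
rewrite !card_imset; [congr (_ + _) | exact: inr_inj | exact: inl_inj].
rewrite -(card_imset _ val_inj); apply: eq_card => f; rewrite !inE.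
apply/imsetP/andP => [[z] | [fS fD]].
  by rewrite !inE => /andP [zS zD] ->.
have fe : f != e by apply: contraNneq eS => <-.
by exists (Sub f fe); rewrite // !inE fS.
Qed.

Lemma count_new_dsub S l i : e \notin S ->
  (forall a, connect (adj G' (dsub S l)) (inl a) (inr i) = false) ->
  count (dsub S l) (inr i) =
  #|[set j : 'I_7 | (val j \in l) && connect (adj G' (dsub S l)) (inr i) (dnew_ends j).1]|.
Proof.
move=> eS nold; rewrite card_comp_edges_dsub //.
have -> : [set a | inl a \in comp_of G' (dsub S l) (inr i)] = set0.
  by apply/setP => a; rewrite !inE connect_adj_sym nold.
have -> : comp_edges ends S set0 = set0 by apply/setP => f; rewrite !inE andbF.
by rewrite cards0 add0n; apply: eq_card => j; rewrite !inE.
Qed.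

Lemma connect_dsub_old S l k a b : e \notin S ->
  (forall i : 'I_7, val i \in l ->
     collapse (fun=> k) (dnew_ends i).1 = collapse (fun=> k) (dnew_ends i).2) ->
  connect (adj G' (dsub S l)) (inl a) (inl b) = connect (adj ends S) a b.
Proof.
move=> eS hl; apply/idP/idP => [|hab].
  apply: (connect_collapse (k := fun=> k)) => [z | i]; first by rewrite inE.
  by rewrite inE => /hl ->; apply: connect0.
apply: connect_lift hab => f fS; have fe : f != e by apply: contraNneq eS => <-.
by apply: (connect_old_edge (z := Sub f fe)); rewrite inE.
Qed.

Lemma connected_dends X T :
  connected_on ends T ->
  (forall f, f \in T -> connect (adj G' X) (inl (ends f).1) (inl (ends f).2)) ->
  (forall i, exists a, connect (adj G' X) (inl a) (inr i)) ->
  connected_on G' X.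
Proof.
move=> connT hT hnew.
have old a b : connect (adj G' X) (inl a) (inl b) by apply: connect_lift (connT a b).
suff [x0 hx0] : exists x0, forall x, connect (adj G' X) x0 x.
  by move=> x y; apply: connect_trans (hx0 y); rewrite connect_adj_sym.
have [a0 _] := hnew (o4 0); exists (inl a0) => -[a | i] //.
by have [a ha] := hnew i; apply: connect_trans ha.
Qed.

Lemma bridge_collapse X T k f :
  (forall y, inl y \in X :\ f -> val y \in T) ->
  (forall i, inr i \in X :\ f ->
     connect (adj ends T) (collapse k (dnew_ends i).1) (collapse k (dnew_ends i).2)) ->
  ~~ connect (adj ends T) (collapse k (G' f).1) (collapse k (G' f).2) ->
  ~~ connect (adj G' (X :\ f)) (G' f).1 (G' f).2.
Proof. by move=> hold hnew; apply: contra; apply: connect_collapse. Qed.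

Lemma bridge_dends_old X T k (z : {x : E | x != e}) :
  spanning_tree ends T -> val z \in T ->
  (forall y, inl y \in X -> val y \in T) ->
  (forall i, inr i \in X -> connect (adj ends (T :\ val z))
     (collapse (fun=> k) (dnew_ends i).1) (collapse (fun=> k) (dnew_ends i).2)) ->
  ~~ connect (adj G' (X :\ inl z)) (G' (inl z)).1 (G' (inl z)).2.
Proof.
move=> [_ bridgeT] zT hold hnew.
apply: (bridge_collapse (T := T :\ val z) (k := fun=> k)) => [y | i |]; last exact: bridgeT.
  rewrite !inE => /andP [yz /hold ->]; rewrite andbT.
  by apply: contra yz => /eqP /val_inj ->.
by rewrite !inE => /hnew.
Qed.

Lemma bridge_cut X l f :
  (forall j, inr j \in X :\ f -> new_in l (dnew_ends j).1 = new_in l (dnew_ends j).2) ->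
  new_in l (G' f).1 != new_in l (G' f).2 ->
  ~~ connect (adj G' (X :\ f)) (G' f).1 (G' f).2.
Proof.
move=> hl; apply: contra => hc; apply/eqP.
by apply: connect_cut hc => -[z | j] // /hl; rewrite dends_new.
Qed.

Lemma light_cotree_dends X S (c : V -> nat) :
  (forall a b, connect (adj G' X) (inl a) (inl b) = connect (adj ends S) a b) ->
  (forall a, count X (inl a) = c a) ->
  (forall i, (exists a, connect (adj G' X) (inl a) (inr i)) \/ ~~ odd (count X (inr i))) ->
  (exists a, c a = 1) ->
  (forall a b, odd (c a) -> odd (c b) -> connect (adj ends S) a b) ->
  exists C', odd_comps G' (~: X) = [set C'] /\ #|comp_edges G' (~: ~: X) C'| = 1.
Proof.
move=> conn_old count_old hnew [a0 one_a0] odd_conn.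
have old_repr z : odd (count X z) ->
    exists2 a, odd (c a) & connect (adj G' X) (inl a) z.
  case: z => [a | i] odd_z; first by exists a; rewrite -?count_old ?connect0.
  case: (hnew i) => [[a ha] | /negP //]; exists a => //.
  by move/comp_ofP: ha odd_z => <-; rewrite count_old.
exists (comp_of G' X (inl a0)); rewrite setCK; split; last by rewrite count_old.
rewrite -[in RHS](setCK X); apply: odd_comps_set1; rewrite setCK ?count_old //.
move=> x y /old_repr [a odd_a hax] /old_repr [b odd_b hby].
have hab : connect (adj G' X) (inl a) (inl b) by rewrite conn_old; apply: odd_conn.
by apply: connect_trans (connect_trans hab hby); rewrite connect_adj_sym.
Qed.

Section TreeEdge.
Variables (T : {set E}) (C : {set V}).
Hypotheses (eT : e \in T) (treeT : spanning_tree ends T)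
  (oddT : odd_comps ends T = [set C]) (oneC : #|comp_edges ends (~: T) C| = 1).
(* [e] is replaced by the tree path u u' s v' v and the tree edge st; the
   cotree gains the path u' t v'. *)
Local Notation X := (dsub (~: T) [:: 3; 5]).
Local Notation tconnect := (connect (adj G' (~: X))).

Lemma eNcT : e \notin ~: T. Proof. by rewrite inE negbK. Qed.

Lemma connect_eT_old a b :
  connect (adj G' X) (inl a) (inl b) = connect (adj ends (~: T)) a b.
Proof. by apply: (connect_dsub_old (k := u) _ _ eNcT) => i; case_I7 i. Qed.

Lemma connect_eT_new a i : connect (adj G' X) (inl a) (inr i) = false.
Proof.
apply/negbTE/negP => hc.
suff : new_in [:: 0; 1; 2; 3] (inl a) = new_in [:: 0; 1; 2; 3] (inr i).
  by elim/I4_ind: i {hc}.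
by apply: connect_cut hc => -[z | j] //; case_I7 j.
Qed.

Lemma connect_eT_uv : connect (adj G' X) du dv.
Proof.
have ut : connect (adj G' X) du dt by apply: (connect_new_edge (i := o7 3)); rewrite inE.
have tv : connect (adj G' X) dt dv.
  by apply: (connect_new_edge_sym (i := o7 5)); rewrite inE.
exact: connect_trans ut tv.
Qed.

Lemma count_eT_old a :
  count X (inl a) = #|comp_edges ends (~: T) (comp_of ends (~: T) a)|.
Proof.
rewrite card_comp_edges_dsub ?eNcT // card_I7 /= !inE !connect_eT_new /= !addn0.
by congr #|comp_edges _ _ _|; apply/setP => b; rewrite !inE connect_eT_old.
Qed.

Lemma count_eT_new i : ~~ odd (count X (inr i)).
Proof.
rewrite (count_new_dsub eNcT) => [|a]; last exact: connect_eT_new.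
rewrite card_I7 /= (_ : connect _ (inr i) dv = connect (adj G' X) (inr i) du).
  by case: (connect _ _ du).
apply/idP/idP => h; last exact: connect_trans h connect_eT_uv.
by apply: connect_trans h _; rewrite connect_adj_sym connect_eT_uv.
Qed.

Lemma connected_eT : connected_on G' (~: X).
Proof.
have c0 : tconnect (inl u) du by apply: (connect_new_edge (i := o7 0)); rewrite !inE.
have c2 : tconnect du ds by apply: (connect_new_edge (i := o7 2)); rewrite !inE.
have c4 : tconnect ds dv by apply: (connect_new_edge_sym (i := o7 4)); rewrite !inE.
have c6 : tconnect ds dt by apply: (connect_new_edge (i := o7 6)); rewrite !inE.
apply: (connected_dends treeT.1) => [f fT | i].
  have [-> | fe] := eqVneq f e.
    apply: connect_trans (connect_trans c0 (connect_trans c2 c4)) _.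
    by apply: (connect_new_edge (i := o7 1)); rewrite !inE.
  by apply: (connect_old_edge (z := Sub f fe)); rewrite !inE negbK.
exists u; apply: connect_trans c0 _.
by elim/I4_ind: i; rewrite ?connect0 ?c2 ?(connect_trans c2 c4) ?(connect_trans c2 c6).
Qed.

Lemma bridges_eT f : f \in ~: X ->
  ~~ connect (adj G' (~: X :\ f)) (G' f).1 (G' f).2.
Proof.
case: f => [z | i] fX.
  apply: (bridge_dends_old (k := u) treeT) => [||i]; first by rewrite !inE negbK in fX.
    by move=> y; rewrite !inE negbK.
  case_I7 i; move=> // _.
  by apply/connect1/(adj_edge (f := e)); [rewrite !inE eT eq_sym (valP z) | case: (ends e)].
have old j y : inl y \in ~: X :\ inr j -> val y \in T :\ e.
  by rewrite !inE negbK (valP y).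
have nuv := treeT.2 e eT; have nvu := nuv; rewrite connect_adj_sym in nvu.
move: fX; elim/I7_ind: i; rewrite !inE // => _.
- apply: (bridge_collapse (k := fun=> v) (old _)) => [j |]; last by rewrite dends_new.
  by case_I7 j.
- apply: (bridge_collapse (k := fun=> u) (old _)) => [j |]; last by rewrite dends_new.
  by case_I7 j.
- apply: (bridge_collapse (k := fun j => if val j == 0 then u else v) (old _)) => [j |].
    by case_I7 j.
  by rewrite dends_new.
- apply: (bridge_collapse (k := fun j => if val j == 1 then v else u) (old _)) => [j |].
    by case_I7 j.
  by rewrite dends_new.
- by apply: (bridge_cut (l := [:: 3])) => [j |]; [case_I7 j | rewrite dends_new].
Qed.

Lemma light_eT : light_spanning_tree G' (~: X).
Proof.
split; first by split; [exact: connected_eT | exact: bridges_eT].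
apply: (light_cotree_dends (S := ~: T)) => [||i||a b].
- exact: connect_eT_old.
- exact: count_eT_old.
- by right; apply: count_eT_new.
- by have [a0 C_a0] := odd_comp_repr oddT; exists a0; rewrite -C_a0.
by move=> /(odd_comp_of oddT) Ca /(odd_comp_of oddT) Cb; apply/comp_ofP; rewrite Ca Cb.
Qed.

End TreeEdge.

Section CotreeEdge.
Variables (T : {set E}) (C : {set V}).
Hypotheses (eT : e \notin T) (treeT : spanning_tree ends T)
  (oddT : odd_comps ends T = [set C]) (oneC : #|comp_edges ends (~: T) C| = 1).
Local Notation S0 := (~: T :\ e).

Lemma eNS0 : e \notin S0. Proof. by rewrite !inE eqxx. Qed.

Lemma in_dtree_old l (y : {x : E | x != e}) : (inl y \in ~: dsub S0 l) = (val y \in T).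
Proof. by rewrite !inE (valP y) negbK. Qed.

Lemma connected_eNT l :
  (forall i, exists a, connect (adj G' (~: dsub S0 l)) (inl a) (inr i)) ->
  connected_on G' (~: dsub S0 l).
Proof.
move=> hnew; apply: (connected_dends treeT.1) => // f fT.
have fe : f != e by apply: contraNneq eT => <-.
by apply: (connect_old_edge (z := Sub f fe)); rewrite in_dtree_old.
Qed.

Section PendantU.
(* The cotree gains the pendant edge uu' and the path v' s t. *)
Local Notation X := (dsub S0 [:: 0; 4; 6]).
Local Notation tconnect := (connect (adj G' (~: X))).

Lemma connect_pendu_old a b :
  connect (adj G' X) (inl a) (inl b) = connect (adj ends S0) a b.
Proof. by apply: (connect_dsub_old (k := u) _ _ eNS0) => i; case_I7 i. Qed.

Lemma connect_pendu_new a i :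
  connect (adj G' X) (inl a) (inr i) = (i == o4 0) && connect (adj ends S0) a u.
Proof.
apply/idP/andP => [hc | [/eqP -> hau]]; last first.
  apply: connect_trans (_ : connect _ (inl u) du); first by rewrite connect_pendu_old.
  by apply: (connect_new_edge (i := o7 0)); rewrite inE.
split; last first.
  by apply: (connect_collapse (k := fun=> u)) hc => [y | j]; [rewrite inE | case_I7 j].
suff : new_in [:: 1; 2; 3] (inl a) = new_in [:: 1; 2; 3] (inr i) by elim/I4_ind: i {hc}.
by apply: connect_cut hc => -[z | j] //; case_I7 j.
Qed.

Lemma count_pendu_old a : count X (inl a) = split_count ends T e u a.
Proof.
rewrite card_comp_edges_dsub ?eNS0 // card_I7 /= !inE !connect_pendu_new.
rewrite connect_pendu_old /=.
rewrite /split_count inE !addn0.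
suff -> : [set b | inl b \in comp_of G' X (inl a)] = comp_of ends S0 a by [].
by apply/setP => b; rewrite !inE connect_pendu_old.
Qed.

Lemma count_pendu_new i : i != o4 0 -> ~~ odd (count X (inr i)).
Proof.
move=> i0; rewrite (count_new_dsub eNS0) => [|a]; last first.
  by rewrite connect_pendu_new (negbTE i0).
rewrite card_I7 /=; have -> : connect (adj G' X) (inr i) (inl u) = false.
  by rewrite connect_adj_sym connect_pendu_new (negbTE i0).
have ds_dv : connect (adj G' X) ds dv.
  by apply: (connect_new_edge_sym (i := o7 4)); rewrite inE.
have -> : connect (adj G' X) (inr i) ds = connect (adj G' X) (inr i) dv.
  apply/idP/idP => h; first exact: connect_trans h ds_dv.
  by apply: connect_trans h _; rewrite connect_adj_sym.
by case: (connect _ _ dv).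
Qed.

Lemma bridges_pendu f : f \in ~: X -> ~~ connect (adj G' (~: X :\ f)) (G' f).1 (G' f).2.
Proof.
case: f => [z | i] fX.
  apply: (bridge_dends_old (k := v) treeT) => [|y|j]; first by rewrite in_dtree_old in fX.
    by rewrite in_dtree_old.
  by case_I7 j.
move: fX; elim/I7_ind: i; rewrite !inE // => _.
- by apply: (bridge_cut (l := [:: 0; 1; 2; 3])) => [j |]; [case_I7 j | rewrite dends_new].
- by apply: (bridge_cut (l := [:: 2])) => [j |]; [case_I7 j | rewrite dends_new].
- by apply: (bridge_cut (l := [:: 0; 2])) => [j |]; [case_I7 j | rewrite dends_new].
- by apply: (bridge_cut (l := [:: 0; 2; 3])) => [j |]; [case_I7 j | rewrite dends_new].
Qed.

Lemma connected_pendu : connected_on G' (~: X).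
Proof.
have c1 : tconnect (inl v) dv by apply: (connect_new_edge_sym (i := o7 1)); rewrite !inE.
have c5 : tconnect dv dt by apply: (connect_new_edge (i := o7 5)); rewrite !inE.
have c3 : tconnect dt du by apply: (connect_new_edge_sym (i := o7 3)); rewrite !inE.
have c2 : tconnect du ds by apply: (connect_new_edge (i := o7 2)); rewrite !inE.
apply: connected_eNT => i; exists v; apply: connect_trans c1 _.
by elim/I4_ind: i;
  rewrite ?connect0 ?(connect_trans c5 c3) ?(connect_trans c5 (connect_trans c3 c2)).
Qed.

Hypothesis fits_u : pendant_fits ends T e u.

Lemma light_pendu : light_spanning_tree G' (~: X).
Proof.
have eS : e \in ~: T by rewrite inE.
have w_u : u \in [:: u; v] by rewrite inE eqxx.
split; first by split; [exact: connected_pendu | exact: bridges_pendu].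
apply: (light_cotree_dends (S := S0)) => [||i||].
- exact: connect_pendu_old.
- exact: count_pendu_old.
- have [-> | i0] := eqVneq i (o4 0); last by right; apply: count_pendu_new.
  by left; exists u; rewrite connect_pendu_new connect0.
- exact: split_count_one oddT oneC eS w_u.
- exact: split_count_odd oddT oneC eS w_u fits_u.
Qed.

End PendantU.

Section PendantV.
(* The cotree gains the pendant edge v'v and the path u' s t. *)
Local Notation X := (dsub S0 [:: 1; 2; 6]).
Local Notation tconnect := (connect (adj G' (~: X))).

Lemma connect_pendv_old a b :
  connect (adj G' X) (inl a) (inl b) = connect (adj ends S0) a b.
Proof. by apply: (connect_dsub_old (k := v) _ _ eNS0) => i; case_I7 i. Qed.

Lemma connect_pendv_cut x y : connect (adj G' X) x y ->
  new_in [:: 0; 2; 3] x = new_in [:: 0; 2; 3] y.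
Proof. by move=> hc; apply: connect_cut hc => -[z | j] //; case_I7 j. Qed.

Lemma connect_pendv_new a i :
  connect (adj G' X) (inl a) (inr i) = (i == o4 1) && connect (adj ends S0) a v.
Proof.
apply/idP/andP => [hc | [/eqP -> hav]]; last first.
  apply: connect_trans (_ : connect _ (inl v) dv); first by rewrite connect_pendv_old.
  by apply: (connect_new_edge_sym (i := o7 1)); rewrite inE.
split; first by move/connect_pendv_cut: hc; elim/I4_ind: i.
by apply: (connect_collapse (k := fun=> v)) hc => [y | j]; [rewrite inE | case_I7 j].
Qed.

Lemma count_pendv_old a : count X (inl a) = split_count ends T e v a.
Proof.
rewrite card_comp_edges_dsub ?eNS0 // card_I7 /= !inE !connect_pendv_new /= !addn0 add0n.
rewrite /split_count inE.
suff -> : [set b | inl b \in comp_of G' X (inl a)] = comp_of ends S0 a by [].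
by apply/setP => b; rewrite !inE connect_pendv_old.
Qed.

Lemma count_pendv_new i : i != o4 1 -> ~~ odd (count X (inr i)).
Proof.
move=> i1; rewrite (count_new_dsub eNS0) => [|a]; last first.
  by rewrite connect_pendv_new (negbTE i1).
rewrite card_I7 /=; have -> : connect (adj G' X) (inr i) dv = false.
  by apply/negP => /connect_pendv_cut; move: i1; elim/I4_ind: i.
have du_ds : connect (adj G' X) du ds by apply: (connect_new_edge (i := o7 2)); rewrite inE.
have -> : connect (adj G' X) (inr i) ds = connect (adj G' X) (inr i) du.
  apply/idP/idP => h; last exact: connect_trans h du_ds.
  by apply: connect_trans h _; rewrite connect_adj_sym.
by case: (connect _ _ du).
Qed.

Lemma bridges_pendv f : f \in ~: X -> ~~ connect (adj G' (~: X :\ f)) (G' f).1 (G' f).2.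
Proof.
case: f => [z | i] fX.
  apply: (bridge_dends_old (k := u) treeT) => [|y|j]; first by rewrite in_dtree_old in fX.
    by rewrite in_dtree_old.
  by case_I7 j.
move: fX; elim/I7_ind: i; rewrite !inE // => _.
- by apply: (bridge_cut (l := [:: 0; 1; 2; 3])) => [j |]; [case_I7 j | rewrite dends_new].
- by apply: (bridge_cut (l := [:: 1; 2; 3])) => [j |]; [case_I7 j | rewrite dends_new].
- by apply: (bridge_cut (l := [:: 2])) => [j |]; [case_I7 j | rewrite dends_new].
- by apply: (bridge_cut (l := [:: 1; 2])) => [j |]; [case_I7 j | rewrite dends_new].
Qed.

Lemma connected_pendv : connected_on G' (~: X).
Proof.
have c0 : tconnect (inl u) du by apply: (connect_new_edge (i := o7 0)); rewrite !inE.
have c3 : tconnect du dt by apply: (connect_new_edge (i := o7 3)); rewrite !inE.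
have c5 : tconnect dt dv by apply: (connect_new_edge_sym (i := o7 5)); rewrite !inE.
have c4 : tconnect dv ds by apply: (connect_new_edge (i := o7 4)); rewrite !inE.
apply: connected_eNT => i; exists u; apply: connect_trans c0 _.
by elim/I4_ind: i;
  rewrite ?connect0 ?(connect_trans c3 c5) ?c3 ?(connect_trans c3 (connect_trans c5 c4)).
Qed.

Hypothesis fits_v : pendant_fits ends T e v.

Lemma light_pendv : light_spanning_tree G' (~: X).
Proof.
have eS : e \in ~: T by rewrite inE.
have w_v : v \in [:: u; v] by rewrite !inE eqxx orbT.
split; first by split; [exact: connected_pendv | exact: bridges_pendv].
apply: (light_cotree_dends (S := S0)) => [||i||].
- exact: connect_pendv_old.
- exact: count_pendv_old.
- have [-> | i1] := eqVneq i (o4 1); last by right; apply: count_pendv_new.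
  by left; exists v; rewrite connect_pendv_new connect0.
- exact: split_count_one oddT oneC eS w_v.
- exact: split_count_odd oddT oneC eS w_v fits_v.
Qed.

End PendantV.

Lemma light_eNT : exists T' : {set E'}, light_spanning_tree G' T'.
Proof.
case: (boolP (pendant_fits ends T e u)) => [fits_u | /pendant_fits_v fits_v].
  by exists (~: dsub S0 [:: 0; 4; 6]); apply: light_pendu.
by exists (~: dsub S0 [:: 1; 2; 6]); apply: light_pendv.
Qed.

End CotreeEdge.

Lemma light_tree_dends T :
  light_spanning_tree ends T -> exists T' : {set E'}, light_spanning_tree G' T'.
Proof.
case=> treeT [C [oddT oneC]]; have [eT | eT] := boolP (e \in T).
  by exists (~: dsub (~: T) [:: 3; 5]); apply: light_eT eT treeT oddT oneC.
exact: light_eNT eT treeT oddT oneC.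
Qed.

End Diamond.

Theorem lemma5 (V E : finType) (ends : E -> V * V) (e : E) :
  loopless ends -> cubic ends -> has_light_xuong_tree ends ->
  has_light_xuong_tree (dends ends e).
Proof.
move=> _ _ [T [[treeT [g [[[r rot_r genus_r] _] xiT]]] lightT]].
have hE : #|E| = #|V| + 2 * g.
  by case: lightT xiT => C [oddT _]; rewrite oddT cards1; lia.
have [T' [treeT' [C' [oddT' oneC']]]] := light_tree_dends e (conj treeT lightT).
exists T'; split; last by exists C'.
split=> //; exists g.+1; split; first exact: max_genus_dends rot_r genus_r hE.
by rewrite oddT' cards1 card_dV card_dE; lia.
Qed.
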